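(* Let $M$ be a nontrivial monoid in $\mathcal{C}$ and let $V=\mathbb{R}\otimes_\mathbb{Z}\mathrm{gp}(M)$. The following are equivalent: (a) $M$ is an HFM; (b) every face submonoid of $M$ is an HFM; (c) $\dim\mathsf{conv}_V(\mathcal{A}(M))<\dim\mathsf{cone}_V(M)$.
   Context: Convention: all monoids are commutative, cancellative, and reduced, written additively; $M^\bullet=M\setminus\{0\}$; atoms $\mathcal{A}(M)=M^\bullet\setminus(M^\bullet+M^\bullet)$. $\mathcal{C}$ is the class of monoids isomorphic to a submonoid of a free commutative monoid of finite rank (equivalently, of $(\mathbb{N}^d,+)$). $M$ is regarded as a submonoid of $V=\mathbb{R}\otimes_\mathbb{Z}\mathrm{gp}(M)$; $\mathsf{cone}_V(M)$ is the set of finite nonnegative linear combinations of elements of $M$ and $\mathsf{conv}_V$ denotes convex hull; dimensions are dimensions of affine hulls. A face of a cone $C$ is a cone $F\subseteq C$ such that whenever $x,y\in C$ and $F$ meets the open segment between $x$ and $y$, then $x,y\in F$; a face submonoid of $M$ is $M\cap F$ for a face $F$ of $\mathsf{cone}_V(M)$. A factorization of $x\in M$ is a formal sum (multiset) of atoms summing to $x$; its length is the number of atoms counted with multiplicity. $M$ is an HFM (half-factorial monoid) if every element is a sum of atoms and any two factorizations of the same nonzero element have the same length. *)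

(* Monoids in class C are represented as submonoids of (N^d,+),
   i.e. predicates on row vectors 'rV[nat]_d. The real vector space V is
   realised inside 'rV[R]_d (R an arbitrary real field) via the embedding emb. *)
From HB Require Import structures.
From mathcomp Require Import all_boot all_order all_algebra.
Set Implicit Arguments. Unset Strict Implicit. Unset Printing Implicit Defensive.
Import Order.TTheory GRing.Theory Num.Theory.
Local Open Scope ring_scope.

Definition submonoid (d : nat) (M : 'rV[nat]_d -> Prop) : Prop :=
  M 0 /\ (forall x y, M x -> M y -> M (x + y)).

Definition is_atom (d : nat) (M : 'rV[nat]_d -> Prop) (x : 'rV[nat]_d) : Prop :=
  M x /\ x <> 0 /\
  ~ (exists y z, M y /\ M z /\ y <> 0 /\ z <> 0 /\ x = y + z).

(* a factorization of x in M: a (multi)set of atoms of M, listed as a sequence,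
   summing to x; its length is the size of the sequence *)
Definition is_factorization (d : nat) (M : 'rV[nat]_d -> Prop)
  (x : 'rV[nat]_d) (s : seq 'rV[nat]_d) : Prop :=
  (forall a, a \in s -> is_atom M a) /\ \sum_(a <- s) a = x.

Definition HFM (d : nat) (M : 'rV[nat]_d -> Prop) : Prop :=
  (forall x, M x -> exists s, is_factorization M x s) /\
  (forall x s t, M x -> x <> 0 -> is_factorization M x s ->
     is_factorization M x t -> size s = size t).

Definition emb (R : realFieldType) (d : nat) (x : 'rV[nat]_d) : 'rV[R]_d :=
  \row_i ((x 0 i)%:R).

Definition coneV (R : realFieldType) (d : nat) (M : 'rV[nat]_d -> Prop)
  (v : 'rV[R]_d) : Prop :=
  exists s : seq ('rV[nat]_d * R),
    (forall p, p \in s -> M p.1 /\ 0 <= p.2) /\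
    v = \sum_(p <- s) p.2 *: emb R p.1.

Definition convV (R : realFieldType) (d : nat) (A : 'rV[nat]_d -> Prop)
  (v : 'rV[R]_d) : Prop :=
  exists s : seq ('rV[nat]_d * R),
    (forall p, p \in s -> A p.1 /\ 0 <= p.2) /\
    \sum_(p <- s) p.2 = 1 /\
    v = \sum_(p <- s) p.2 *: emb R p.1.

Definition is_cone (R : realFieldType) (d : nat) (F : 'rV[R]_d -> Prop) : Prop :=
  F 0 /\ (forall x y, F x -> F y -> F (x + y)) /\
  (forall (c : R) x, 0 <= c -> F x -> F (c *: x)).

Definition is_face (R : realFieldType) (d : nat) (C F : 'rV[R]_d -> Prop) : Prop :=
  is_cone F /\ (forall x, F x -> C x) /\
  (forall x y (t : R), C x -> C y -> 0 < t -> t < 1 ->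
     F ((1 - t) *: x + t *: y) -> F x /\ F y).

Definition face_submonoid (R : realFieldType) (d : nat) (M : 'rV[nat]_d -> Prop)
  (F : 'rV[R]_d -> Prop) : 'rV[nat]_d -> Prop :=
  fun x => M x /\ F (emb R x).

(* The dimension is the dimension of the direction space, i.e. the maximal
   dimension of the span of differences x - x0 with x ranging over finite
   subsets of S, for a base point x0 in S. *)
Definition is_affdim (R : realFieldType) (d : nat) (S : 'rV[R]_d -> Prop)
  (n : int) : Prop :=
  ((forall x, ~ S x) /\ n = -1) \/
  (exists x0, S x0 /\
     (exists s : seq 'rV[R]_d, (forall x, x \in s -> S x) /\
        (\dim <<[seq x - x0 | x <- s]>>%VS)%:Z = n) /\
     (forall s : seq 'rV[R]_d, (forall x, x \in s -> S x) ->
        (\dim <<[seq x - x0 | x <- s]>>%VS)%:Z <= n)).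

(* (a) <-> (b).  Every face F of cone(M) is divisor-closed in M: if y + z lies
   in F, so do y and z.  Hence the atoms of M ∩ F are the atoms of M lying in
   F, every factorization in M of an element of M ∩ F is one in M ∩ F, and
   M ∩ F inherits half-factoriality.  Conversely cone(M) is a face of itself
   with M ∩ cone(M) = M.

   (a) <-> (c).  M is atomic, so cone(M) spans the same space as A(M).  Fix a
   base point x0 of conv(A(M)) and let W be its direction space; then
   dim cone(M) <= dim conv(A(M)) exactly when x0 lies in W.
   * Two factorizations s, t of one element with |s| <> |t| give
     sum_s (a - x0) - sum_t (a - x0) = (|t| - |s|) x0 in W.
   * Conversely x0 in W is a weight-0 combination of atoms as well as a
     weight-1 one, so there is a real affine relation sum c_a a = 0 with
     sum c_a = 1.  By linear algebra over Q it may be taken rational, then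
     integral, and splitting the integer coefficients by sign gives two
     factorizations of one element whose lengths differ by sum c_a <> 0. *)
From HB Require Import structures.
From mathcomp Require Import all_boot all_order all_algebra zify.
From Stdlib Require Import Classical FunctionalExtensionality PropExtensionality.
Import Order.TTheory GRing.Theory Num.Theory.
Set Implicit Arguments. Unset Strict Implicit. Unset Printing Implicit Defensive.
Local Open Scope ring_scope.

Section Atomicity.
Variables (d : nat) (M : 'rV[nat]_d -> Prop).

(* the total degree of a vector of N^d: a monoid morphism to N vanishing only at 0 *)
Definition degree (x : 'rV[nat]_d) : nat := (\sum_(i < d) x ord0 i)%N.

Lemma degreeD x y : degree (x + y) = (degree x + degree y)%N.
Proof. by rewrite /degree -big_split /=; apply: eq_bigr => i _; rewrite mxE. Qed.

Lemma degree_eq0 x : degree x = 0%N -> x = 0.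
Proof.
move=> /eqP; rewrite /degree sum_nat_eq0 => /forallP x0.
by apply/rowP => j; rewrite mxE; apply/eqP; exact: x0.
Qed.

(* M is atomic: induction on the degree, splitting non-atoms into two nonzero summands *)
Lemma atomic x : M x -> exists s, is_factorization M x s.
Proof.
move=> Mx; have [n deg_x] := ubnP (degree x); elim: n => // n IHn in x Mx deg_x *.
have [->|x_nz] := eqVneq x 0; first by exists [::]; rewrite /is_factorization big_nil.
case: (classic (is_atom M x)) => [x_atom|x_not_atom].
  by exists [:: x]; split; [move=> a; rewrite inE => /eqP -> | rewrite big_seq1].
have [y [z [My [Mz [y_nz [z_nz x_yz]]]]]] :
    exists y z, M y /\ M z /\ y <> 0 /\ z <> 0 /\ x = y + z.
  by apply: NNPP => no_split; apply: x_not_atom; split => //; split => //; exact/eqP.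
have deg_pos w : w <> 0 -> (0 < degree w)%N by rewrite lt0n => w_nz; apply/eqP => /degree_eq0.
have := deg_pos y y_nz; have := deg_pos z z_nz; subst x; rewrite degreeD in deg_x => z_pos y_pos.
have [s [s_atoms <-]] := IHn y My (ltac:(lia)).
have [t [t_atoms <-]] := IHn z Mz (ltac:(lia)).
exists (s ++ t); split; last by rewrite big_cat.
by move=> a; rewrite mem_cat => /orP [/s_atoms | /t_atoms].
Qed.

Lemma sum_atoms_eq0 s :
  (forall a, a \in s -> is_atom M a) -> \sum_(a <- s) a = 0 -> s = [::].
Proof.
have degree0 : degree 0 = 0%N by rewrite /degree big1 // => i _; rewrite mxE.
case: s => [//|a s] atoms; rewrite big_cons => /(congr1 degree).
rewrite degreeD degree0 => sum0.
have [_ [a_nz _]] := atoms a (mem_head _ _).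
by case: a_nz; apply: degree_eq0; move: sum0; case: (degree a).
Qed.

Hypothesis HM : submonoid M.

Lemma submonoid_sum s : (forall a, a \in s -> M a) -> M (\sum_(a <- s) a).
Proof.
case: HM => M0 MD; elim: s => [|a s IHs] Ms; first by rewrite big_nil.
rewrite big_cons; apply: MD; first by apply: Ms; rewrite mem_head.
by apply: IHs => b /(mem_behead (s := a :: s)) /Ms.
Qed.

End Atomicity.

Section Combinations.
Variables (R : realFieldType) (d : nat).
Implicit Types (L : seq ('rV[nat]_d * R)).

Lemma embD (x y : 'rV[nat]_d) : emb R (x + y) = emb R x + emb R y.
Proof. by apply/rowP => j; rewrite !mxE natrD. Qed.

Lemma emb_sum (s : seq 'rV[nat]_d) : emb R (\sum_(a <- s) a) = \sum_(a <- s) emb R a.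
Proof. by apply: (big_morph _ embD); apply/rowP => j; rewrite !mxE. Qed.

Definition comb L : 'rV[R]_d := \sum_(p <- L) p.2 *: emb R p.1.
Definition weight L : R := \sum_(p <- L) p.2.
Definition scale_comb (c : R) L := [seq (p.1, c * p.2) | p <- L].

Lemma comb_cat L1 L2 : comb (L1 ++ L2) = comb L1 + comb L2.
Proof. exact: big_cat. Qed.

Lemma weight_cat L1 L2 : weight (L1 ++ L2) = weight L1 + weight L2.
Proof. exact: big_cat. Qed.

Lemma comb_scale c L : comb (scale_comb c L) = c *: comb L.
Proof. by rewrite /comb big_map scaler_sumr; apply: eq_bigr => p _; rewrite scalerA. Qed.

Lemma weight_scale c L : weight (scale_comb c L) = c * weight L.
Proof. by rewrite /weight big_map mulr_sumr. Qed.

End Combinations.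

Lemma clear_denominators (k : nat) (q : 'I_k -> rat) :
  exists (N : int) (z : 'I_k -> int), N != 0 /\ forall i, (z i)%:~R = q i * N%:~R.
Proof.
pose N := \prod_(i < k) denq (q i).
exists N, (fun i => numq (q i) * \prod_(j < k | j != i) denq (q j)); split.
  by rewrite gt_eqF // prodr_gt0 // => i _; apply: denq_gt0.
move=> i; rewrite /N [in RHS](bigD1 i) //= !intrM mulrA; congr (_ * _).
have den_nz : (denq (q i))%:~R != 0 :> rat by rewrite intr_eq0 denq_neq0.
by rewrite -{2}(divq_num_den (q i)) divfK.
Qed.

(* Solvability of a linear system with rational data over the real field R
   implies solvability over the rationals: an affine relation among integer
   vectors with real coefficients yields one with rational coefficients. *)
Lemma rational_affine_relation (R : realFieldType) (k d : nat)
    (f : 'I_k -> 'rV[nat]_d) (c : 'I_k -> R) :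
  \sum_i c i *: emb R (f i) = 0 -> \sum_i c i = 1 ->
  exists q : 'I_k -> rat,
    (forall j, \sum_i q i * (f i 0 j)%:R = 0) /\ \sum_i q i = 1.
Proof.
move=> comb0 weight1.
pose B : 'M[rat]_(k, d) := \matrix_(i, j) (f i 0 j)%:R.
pose C : 'cV[rat]_k := const_mx 1.
pose e : 'rV[rat]_(d + 1) := row_mx 0 (const_mx 1).
have real_solution : \row_i c i *m map_mx ratr (row_mx B C) = map_mx ratr e.
  rewrite !map_row_mx mul_mx_row map_mx0 !map_const_mx rmorph1; congr row_mx.
    apply/rowP => j; rewrite -[RHS](congr1 (fun v : 'rV_d => v 0 j) comb0).
    by rewrite !mxE summxE; apply: eq_bigr => i _; rewrite !mxE ratr_nat.
  apply/rowP => j; rewrite !mxE -[RHS]weight1; apply: eq_bigr => i _.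
  by rewrite !mxE mulr1.
have : (e <= row_mx B C)%MS.
  by rewrite -(map_submx (ratr : {rmorphism rat -> R})) -real_solution submxMl.
case/submxP => D; rewrite mul_mx_row => /eq_row_mx [DB DC].
exists (fun i => D 0 i); split.
  move=> j; have := congr1 (fun v : 'rV_d => v 0 j) DB; rewrite !mxE => Dj; rewrite [RHS]Dj.
  by apply: eq_bigr => i _; rewrite !mxE.
have := congr1 (fun v : 'M_1 => v 0 0) DC; rewrite !mxE => D1; rewrite [RHS]D1.
by apply: eq_bigr => i _; rewrite !mxE mulr1.
Qed.

Lemma integer_affine_relation (k d : nat) (f : 'I_k -> 'rV[nat]_d) (q : 'I_k -> rat) :
  (forall j, \sum_i q i * (f i 0 j)%:R = 0) -> \sum_i q i = 1 ->
  exists z : 'I_k -> int,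
    (forall j, \sum_i z i * (f i 0 j)%:Z = 0) /\ \sum_i z i != 0.
Proof.
move=> rel weight1; have [N [z [N_nz zE]]] := clear_denominators q.
exists z; split.
  move=> j; apply: (@intr_inj rat); rewrite rmorph_sum rmorph0 /=.
  under eq_bigr do rewrite intrM zE -pmulrn mulrAC.
  by rewrite -mulr_suml rel mul0r.
have sum_z : (\sum_i z i)%:~R = N%:~R :> rat.
  by rewrite rmorph_sum /=; under eq_bigr do rewrite zE; rewrite -mulr_suml weight1 mul1r.
by apply: contraNneq N_nz => sum0; rewrite -(intr_eq0 rat) -sum_z sum0 rmorph0.
Qed.

Section MultisetOfIndices.
Variables (k d : nat) (f : 'I_k -> 'rV[nat]_d).

Definition mset (g : 'I_k -> nat) : seq 'rV[nat]_d :=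
  flatten [seq nseq (g i) (f i) | i <- enum 'I_k].

Lemma mset_sub g : {subset mset g <= codom f}.
Proof.
move=> a /flattenP [u /mapP [i _ ->]]; rewrite mem_nseq => /andP [_ /eqP ->].
exact: codom_f.
Qed.

Lemma mset_sum g : \sum_(a <- mset g) a = \sum_i f i *+ g i.
Proof.
by rewrite big_flatten big_map big_enum; apply: eq_bigr => i _; rewrite big_nseq iter_addr_0.
Qed.

Lemma mset_size g : size (mset g) = (\sum_i g i)%N.
Proof.
rewrite size_flatten sumnE big_map big_map big_enum.
by apply: eq_bigr => i _; rewrite size_nseq.
Qed.

(* An integer relation sum_i z_i f_i = 0 with sum_i z_i <> 0 splits, by
   the signs of the z_i, into two multisets with equal sums and different sizes. *)
Lemma split_integer_relation (z : 'I_k -> int) :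
  (forall j, \sum_i z i * (f i 0 j)%:Z = 0) -> \sum_i z i != 0 ->
  exists s t, [/\ {subset s <= codom f}, {subset t <= codom f},
    \sum_(a <- s) a = \sum_(a <- t) a & size s != size t].
Proof.
move=> rel sum_nz.
pose pos i := if 0 <= z i then `|z i|%N else 0%N.
pose neg i := if 0 <= z i then 0%N else `|z i|%N.
have z_pos_neg i : z i = (pos i)%:Z - (neg i)%:Z.
  rewrite /pos /neg; case: ifP => [z_ge0|z_lt0]; first by rewrite gez0_abs ?subr0.
  by rewrite ltz0_abs ?sub0r ?opprK // ltNge z_lt0.
have natmulE (a n : nat) : a *+ n = (a * n)%N.
  by elim: n => [|n IHn]; rewrite ?muln0 // mulrS IHn mulnS.
exists (mset pos), (mset neg); split; [exact: mset_sub | exact: mset_sub | |].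
- rewrite !mset_sum; apply/rowP => j; rewrite !summxE; apply/eqP.
  rewrite -(eqr_nat int) -subr_eq0 !natr_sum -sumrB; apply/eqP.
  rewrite -[RHS](rel j); apply: eq_bigr => i _.
  by rewrite z_pos_neg mulrBl !mulmxnE !natmulE !natrM !natz ![_ * Posz (f i 0 j)]mulrC.
- apply: contra sum_nz; rewrite !mset_size => /eqP eq_sizes.
  apply/eqP; under eq_bigr do rewrite z_pos_neg.
  by rewrite sumrB -!(big_morph _ PoszD (erefl 0%:Z)) eq_sizes subrr.
Qed.

End MultisetOfIndices.

Lemma affine_relation_multisets (R : realFieldType) (d : nat) (L : seq ('rV[nat]_d * R)) :
  comb L = 0 -> weight L = 1 ->
  exists s t : seq 'rV[nat]_d, [/\ {subset s <= map fst L}, {subset t <= map fst L},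
    \sum_(a <- s) a = \sum_(a <- t) a & size s != size t].
Proof.
move=> comb0 weight1; pose f (i : 'I_(size L)) := (nth (0, 0) L i).1.
have codom_fL : {subset codom f <= map fst L}.
  by move=> a /codomP [i ->]; apply: map_f; apply: mem_nth.
have [q [q_rel q_weight]] : exists q : 'I_(size L) -> rat,
    (forall j, \sum_i q i * (f i 0 j)%:R = 0) /\ \sum_i q i = 1.
  apply: (@rational_affine_relation R _ _ f (fun i => (nth (0, 0) L i).2)).
    by move: comb0; rewrite /comb (big_nth (0, 0)) big_mkord.
  by move: weight1; rewrite /weight (big_nth (0, 0)) big_mkord.
have [z [z_rel z_sum]] := integer_affine_relation q_rel q_weight.
have [s [t [sf tf sum_st size_st]]] := split_integer_relation z_rel z_sum.
by exists s, t; split => // a; [move/sf | move/tf] => /codom_fL.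
Qed.

Section FaceSubmonoids.
Variables (R : realFieldType) (d : nat) (M : 'rV[nat]_d -> Prop).
Hypothesis HM : submonoid M.

Lemma coneV_is_cone : is_cone (@coneV R d M).
Proof.
split; first by exists [::]; rewrite big_nil.
split=> [x y [s [s_ok ->]] [t [t_ok ->]] | c x c_ge0 [s [s_ok ->]]].
  exists (s ++ t); split; last by rewrite big_cat.
  by move=> p; rewrite mem_cat => /orP [/s_ok | /t_ok].
exists (scale_comb c s); split; last exact: esym (comb_scale c s).
by move=> p /mapP [q /s_ok [Mq q_ge0] ->]; split => //; exact: mulr_ge0.
Qed.

Lemma emb_coneV x : M x -> @coneV R d M (emb R x).
Proof.
move=> Mx; exists [:: (x, 1)]; split; last by rewrite big_seq1 scale1r.
by move=> p; rewrite inE => /eqP ->.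
Qed.

(* Faces of cone(M) are divisor-closed in M: y + z in F forces y, z in F,
   since emb (y + z) is the midpoint of 2 emb y and 2 emb z. *)
Lemma face_divisor_closed F : is_face (@coneV R d M) F ->
  forall y z, M y -> M z -> F (emb R (y + z)) -> F (emb R y) /\ F (emb R z).
Proof.
move=> [[_ [_ F_scale]] [_ F_face]] y z My Mz F_yz.
have half_gt0 : (0 : R) < 2^-1 by rewrite invr_gt0 ltr0n.
have half_lt1 : (2^-1 : R) < 1 by rewrite invf_lt1 ?ltr0n // ltr1n.
have double_cone w : M w -> @coneV R d M (2%:R *: emb R w).
  by move=> Mw; have [_ [_ C_scale]] := coneV_is_cone; apply: C_scale (emb_coneV Mw).
have midpoint : emb R (y + z) = (1 - 2^-1) *: (2%:R *: emb R y) + 2^-1 *: (2%:R *: emb R z).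
  have -> : (1 - 2^-1 : R) = 2^-1 by rewrite {1}(splitr 1) mul1r addrK.
  by rewrite !scalerA mulVf ?pnatr_eq0 // !scale1r embD.
rewrite midpoint in F_yz.
have [Fy Fz] := F_face _ _ _ (double_cone _ My) (double_cone _ Mz) half_gt0 half_lt1 F_yz.
have halve w : F (2%:R *: emb R w) -> F (emb R w).
  by move=> /(F_scale _ _ (ltW half_gt0)); rewrite scalerA mulVf ?pnatr_eq0 // scale1r.
by split; apply: halve.
Qed.

Lemma face_atomE F : is_face (@coneV R d M) F -> forall a,
  is_atom (face_submonoid M F) a <-> is_atom M a /\ F (emb R a).
Proof.
move=> F_face a; split.
  move=> [[Ma Fa] [a_nz no_split]]; split => //; split => //; split => //.
  move=> [y [z [My [Mz [y_nz [z_nz a_yz]]]]]]; apply: no_split; exists y, z.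
  have [Fy Fz] := face_divisor_closed F_face My Mz (eq_ind _ (fun w => F (emb R w)) Fa _ a_yz).
  by do !split.
move=> [[Ma [a_nz no_split]] Fa]; split => //; split => //.
by move=> [y [z [[My _] [[Mz _] split_yz]]]]; apply: no_split; exists y, z.
Qed.

Lemma face_factorization F : is_face (@coneV R d M) F -> forall x s,
  F (emb R x) -> is_factorization M x s -> forall a, a \in s -> F (emb R a).
Proof.
move=> F_face x s Fx [s_atoms s_sum] a a_s.
have Ma : M a by have [] := s_atoms a a_s.
have M_rest : M (\sum_(b <- rem a s) b).
  by apply: submonoid_sum => // b /mem_rem /s_atoms [].
by rewrite -s_sum (big_rem a a_s) /= in Fx; have [] := face_divisor_closed F_face Ma M_rest Fx.
Qed.

Lemma face_submonoid_HFM F : is_face (@coneV R d M) F -> HFM M -> HFM (face_submonoid M F).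
Proof.
move=> F_face [M_atomic M_half]; have atomE := face_atomE F_face.
split=> [x [Mx Fx] | x s t [Mx _] x_nz [s_atoms s_sum] [t_atoms t_sum]].
  have [s s_fact] := M_atomic x Mx; exists s; split; last by case: s_fact.
  move=> a a_s; apply/atomE; split; first by case: s_fact => /(_ a a_s).
  exact: face_factorization s_fact a a_s.
by apply: (M_half x) => //; split => // a; [move/s_atoms | move/t_atoms] => /atomE [].
Qed.

(* (a) <-> (b): cone(M) is a face of itself and M ∩ cone(M) = M *)
Lemma HFM_faces : HFM M <->
  (forall F, is_face (@coneV R d M) F -> HFM (face_submonoid M F)).
Proof.
split=> [M_hfm F F_face | faces_hfm]; first exact: face_submonoid_HFM.
have : HFM (face_submonoid M (@coneV R d M)) by apply: faces_hfm; split=> //; exact: coneV_is_cone.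
congr HFM; apply: functional_extensionality => x; apply: propositional_extensionality.
by split=> [[] | Mx] //; split => //; exact: emb_coneV.
Qed.

End FaceSubmonoids.

Lemma bounded_max (P : nat -> Prop) (B : nat) : P 0%N -> (forall k, P k -> (k <= B)%N) ->
  exists k, P k /\ forall j, P j -> (j <= k)%N.
Proof.
elim: B => [|B IHB] P0 bounded; first by exists 0%N; split => // j /bounded.
case: (classic (P B.+1)) => [PB|notPB]; first by exists B.+1.
apply: IHB => // k Pk; have := bounded k Pk; rewrite leq_eqVlt => /orP [/eqP Ek|//].
by rewrite Ek in Pk.
Qed.

Lemma affdim_exists (R : realFieldType) (d : nat) (S : 'rV[R]_d -> Prop) :
  exists n, is_affdim S n.
Proof.
case: (classic (exists x, S x)) => [[x0 Sx0]|empty]; last first.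
  by exists (-1); left; split => // x Sx; apply: empty; exists x.
pose P k := exists s : seq 'rV[R]_d,
  (forall x, x \in s -> S x) /\ \dim <<[seq x - x0 | x <- s]>>%VS = k.
have [k [[s [sS s_dim]] k_max]] : exists k, P k /\ forall j, P j -> (j <= k)%N.
  apply: (@bounded_max P (\dim (fullv : {vspace 'rV[R]_d}))).
    by exists [::]; split => //; rewrite span_nil dimv0.
  by move=> k [s [_ <-]]; apply: dimvS; apply: subvf.
exists k%:Z; right; exists x0; split => //; split; first by exists s; rewrite s_dim.
by move=> t tS; rewrite lez_nat; apply: k_max; exists t.
Qed.

Section Directions.
Variables (R : realFieldType) (d : nat).
Implicit Types (l : seq 'rV[R]_d) (U : {vspace 'rV[R]_d}).

Definition direction (x0 : 'rV[R]_d) l : {vspace 'rV[R]_d} := <<[seq x - x0 | x <- l]>>%VS.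

Lemma direction_sub (x0 : 'rV[R]_d) l1 l2 :
  {subset l1 <= l2} -> (direction x0 l1 <= direction x0 l2)%VS.
Proof. by move=> l12; apply: sub_span => _ /mapP [x /l12 x_l2 ->]; apply: map_f. Qed.

Lemma direction_le_span (x0 : 'rV[R]_d) l U :
  x0 \in U -> {subset l <= U} -> (direction x0 l <= U)%VS.
Proof. by move=> x0_U l_U; apply/span_subvP => _ /mapP [x /l_U x_U ->]; apply: memvB. Qed.

Lemma span_le_direction (x0 : 'rV[R]_d) l : x0 \in direction x0 l -> (<<l>> <= direction x0 l)%VS.
Proof.
move=> x0_dir; apply/span_subvP => x x_l; rewrite -(subrK x0 x).
by apply: memvD x0_dir; apply: memv_span; apply: map_f.
Qed.

(* A set containing 0 bounds, by its affine dimension, the dimension of the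
   span of any finite family of its points (the span is a direction space
   seen from any base point, once 0 is added to the family). *)
Lemma dim_span_le_affdim (S : 'rV[R]_d -> Prop) (n : int) l :
  S 0 -> is_affdim S n -> (forall x, x \in l -> S x) -> (\dim <<l>>)%:Z <= n.
Proof.
move=> S0 [[empty _]|[y0 [_ [_ S_bound]]]] lS; first by case: (empty 0).
have l0S x : x \in 0 :: l -> S x by rewrite inE => /orP [/eqP -> | /lS].
apply: le_trans (S_bound _ l0S); rewrite lez_nat; apply: dimvS.
have y0_dir : y0 \in direction y0 (0 :: l).
  have : 0 - y0 \in direction y0 (0 :: l).
    by apply: memv_span; apply: (map_f (fun x => x - y0)); exact: mem_head.
  by rewrite sub0r memvN.
apply: subv_trans (span_le_direction y0_dir); apply: sub_span => x x_l.
by rewrite inE x_l orbT.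
Qed.

(* If two multisets of lattice points have equal sums but different sizes,
   then any x0 lies in the direction space of their images seen from x0:
   the difference of the two sums of (a - x0) is (|t| - |s|) x0. *)
Lemma base_point_in_direction (s t : seq 'rV[nat]_d) (x0 : 'rV[R]_d) :
  \sum_(a <- s) a = \sum_(a <- t) a -> size s != size t ->
  x0 \in direction x0 (map (@emb R d) (s ++ t)).
Proof.
move=> sum_st size_st; set W := direction _ _.
have sum_in u : {subset u <= s ++ t} -> \sum_(a <- u) (emb R a - x0) \in W.
  move=> u_st; rewrite big_seq; apply: memv_suml => a a_u; apply: memv_span.
  by apply: (map_f (fun x => x - x0)); apply: map_f; exact: u_st.
have s_st : {subset s <= s ++ t} by move=> a; rewrite mem_cat => ->.
have t_st : {subset t <= s ++ t} by move=> a a_t; rewrite mem_cat a_t orbT.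
have := memvB (sum_in s s_st) (sum_in t t_st).
rewrite !sumrB !big_const_seq !count_predT !iter_addr_0 -!emb_sum sum_st.
rewrite opprB addrC addrA subrK -!scaler_nat -scalerBl => /(memvZ ((size t)%:R - (size s)%:R)^-1).
by rewrite scalerA mulVf ?scale1r // subr_eq0 eqr_nat eq_sym.
Qed.

End Directions.

Section ConeSpans.
Variables (R : realFieldType) (d : nat) (M : 'rV[nat]_d -> Prop).

Lemma atom_convV a : is_atom M a -> @convV R d (is_atom M) (emb R a).
Proof.
move=> a_atom; exists [:: (a, 1)]; split; last by rewrite !big_seq1 scale1r.
by move=> p; rewrite inE => /eqP ->.
Qed.

Lemma convV_coneV v : @convV R d (is_atom M) v -> @coneV R d M v.
Proof. by move=> [L [L_ok [_ ->]]]; exists L; split => // p /L_ok [[Mp _] ?]. Qed.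

(* M is atomic, so each point of cone(M) lies in the span of finitely many atoms *)
Lemma coneV_atom_span v : @coneV R d M v ->
  exists T, (forall a, a \in T -> is_atom M a) /\ v \in <<map (@emb R d) T>>%VS.
Proof.
move=> [L [L_ok ->]]; elim: L L_ok => [|p L IHL] L_ok.
  by exists [::]; split => //; rewrite big_nil mem0v.
have [T [T_atoms v_T]] := IHL (fun q q_L => L_ok q (mem_behead (s := p :: L) q_L)).
have [Mp _] := L_ok p (mem_head _ _).
have [s [s_atoms s_sum]] := atomic Mp.
exists (s ++ T); split; first by move=> a; rewrite mem_cat => /orP [/s_atoms | /T_atoms].
rewrite big_cons map_cat span_cat; apply: memv_add; last exact: v_T.
apply: memvZ; rewrite -s_sum emb_sum big_seq; apply: memv_suml => a a_s.
by apply: memv_span; apply: map_f.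
Qed.

Lemma coneV_atom_span_seq (l : seq 'rV[R]_d) : (forall v, v \in l -> @coneV R d M v) ->
  exists T, (forall a, a \in T -> is_atom M a) /\ {subset l <= <<map (@emb R d) T>>%VS}.
Proof.
elim: l => [|v l IHl] l_cone; first by exists [::].
have [T [T_atoms l_T]] := IHl (fun w w_l => l_cone w (mem_behead (s := v :: l) w_l)).
have [T' [T'_atoms v_T']] := coneV_atom_span (l_cone v (mem_head _ _)).
exists (T' ++ T); split; first by move=> a; rewrite mem_cat => /orP [/T'_atoms | /T_atoms].
move=> w; rewrite inE map_cat span_cat => /orP [/eqP -> | /l_T w_T].
  by rewrite -[v]addr0; apply: memv_add => //; exact: mem0v.
by rewrite -[w]add0r; apply: memv_add => //; exact: mem0v.
Qed.

(* (c) -> (a): two factorizations of different lengths put the base point of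
   conv(A(M)) in its direction space, which then contains every atom and hence
   cone(M); so dim cone(M) <= dim conv(A(M)). *)
Lemma affdim_HFM (m n : int) :
  is_affdim (@convV R d (is_atom M)) m -> is_affdim (@coneV R d M) n -> m < n -> HFM M.
Proof.
move=> conv_dim cone_dim m_lt_n; split=> [|x s t _ _ [s_atoms s_sum] [t_atoms t_sum]].
  exact: atomic.
case: (eqVneq (size s) (size t)) => // size_st; exfalso.
have [a a_st] : exists a, a \in s ++ t.
  case st: (s ++ t) => [|a ?]; last by exists a; rewrite mem_head.
  by move: st size_st; case: s {s_atoms s_sum} => [|? ?]; case: t {t_atoms t_sum}.
have st_atoms b : b \in s ++ t -> is_atom M b by rewrite mem_cat => /orP [/s_atoms | /t_atoms].
case: conv_dim => [[empty _]|[x0 [_ [_ conv_bound]]]].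
  by case: (empty (emb R a)); apply: atom_convV; exact: st_atoms.
case: cone_dim => [[empty _]|[y0 [y0_cone [[sc [sc_cone sc_dim]] _]]]].
  by have [cone0 _] := @coneV_is_cone R d M; case: (empty 0).
have [T [T_atoms T_span]] : exists T, (forall b, b \in T -> is_atom M b) /\
    {subset y0 :: sc <= <<map (@emb R d) T>>%VS}.
  by apply: coneV_atom_span_seq => v; rewrite inE => /orP [/eqP -> | /sc_cone].
pose L := map (@emb R d) (T ++ s ++ t).
have L_conv v : v \in L -> @convV R d (is_atom M) v.
  move=> /mapP [b]; rewrite mem_cat => /orP [/T_atoms | /st_atoms] b_atom ->;
  exact: atom_convV.
have x0_dir : x0 \in direction x0 L.
  have: (direction x0 (map (@emb R d) (s ++ t)) <= direction x0 L)%VS.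
    by apply: direction_sub => v v_st; rewrite /L (map_cat _ T) mem_cat v_st orbT.
  by move/subvP; apply; apply: base_point_in_direction (etrans s_sum (esym t_sum)) size_st.
have T_dir : (<<map (@emb R d) T>> <= direction x0 L)%VS.
  apply: subv_trans (span_le_direction x0_dir); apply: sub_span => v.
  by rewrite /L map_cat mem_cat => ->.
have : n <= m.
  rewrite -sc_dim; apply: le_trans (conv_bound L L_conv); rewrite lez_nat.
  apply: dimvS; apply: subv_trans T_dir; apply: direction_le_span.
    by apply: T_span; exact: mem_head.
  by move=> v v_sc; apply: T_span; rewrite inE v_sc orbT.
by rewrite leNgt m_lt_n.
Qed.

End ConeSpans.

Section HalfFactorialDimension.
Variables (R : realFieldType) (d : nat) (M : 'rV[nat]_d -> Prop).
Hypothesis HM : submonoid M.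

Definition atom_supported (L : seq ('rV[nat]_d * R)) := forall p, p \in L -> is_atom M p.1.

Lemma atom_supported_cat L1 L2 :
  atom_supported L1 -> atom_supported L2 -> atom_supported (L1 ++ L2).
Proof. by move=> L1_atoms L2_atoms p; rewrite mem_cat => /orP [/L1_atoms | /L2_atoms]. Qed.

Lemma atom_supported_scale c L : atom_supported L -> atom_supported (scale_comb c L).
Proof. by move=> L_atoms p /mapP [q /L_atoms q_atom ->]. Qed.

Lemma direction_zero_weight (L0 : seq ('rV[nat]_d * R)) (sc : seq 'rV[R]_d) :
  atom_supported L0 -> weight L0 = 1 -> (forall x, x \in sc -> @convV R d (is_atom M) x) ->
  forall v, v \in direction (comb L0) sc ->
  exists L, [/\ atom_supported L, comb L = v & weight L = 0].
Proof.
move=> L0_atoms L0_weight; elim: sc => [|x sc IHsc] sc_conv v.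
  by rewrite /direction span_nil memv0 => /eqP ->; exists [::]; rewrite /comb /weight !big_nil.
rewrite /direction /= span_cons => /memv_addP [_ /vlineP [c ->] [w w_sc ->]].
have sc_conv' y : y \in sc -> @convV R d (is_atom M) y.
  by move=> y_sc; apply: sc_conv; exact: mem_behead.
have [Lw [Lw_atoms <- Lw_weight]] := IHsc sc_conv' w w_sc.
have [Lx [Lx_ok [Lx_weight ->]]] := sc_conv x (mem_head _ _).
have Lx_atoms : atom_supported Lx by move=> p /Lx_ok [].
exists (scale_comb c Lx ++ scale_comb (- c) L0 ++ Lw); split.
- by apply: atom_supported_cat; [|apply: atom_supported_cat] => //; apply: atom_supported_scale.
- by rewrite !comb_cat !comb_scale scalerBr scaleNr addrA.
- by rewrite !weight_cat !weight_scale [weight Lx]Lx_weight L0_weight Lw_weight !mulr1 addr0 subrr.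
Qed.

(* In a half-factorial monoid there is no affine relation among atoms: it would
   give two factorizations of one element with different lengths. *)
Lemma HFM_no_affine_relation (L : seq ('rV[nat]_d * R)) :
  HFM M -> atom_supported L -> comb L = 0 -> weight L = 1 -> False.
Proof.
move=> [_ M_half] L_atoms comb0 weight1.
have [s [t [sL tL sum_st size_st]]] := affine_relation_multisets comb0 weight1.
have sub_atoms (u : seq 'rV[nat]_d) : {subset u <= map fst L} -> forall a, a \in u -> is_atom M a.
  by move=> uL a /uL /mapP [p /L_atoms p_atom ->].
have Ms : M (\sum_(a <- s) a) by apply: submonoid_sum => // a /(sub_atoms s sL) [].
have [sum0|sum_nz] := eqVneq (\sum_(a <- s) a) 0.
  have s0 := sum_atoms_eq0 (sub_atoms s sL) sum0.
  have t0 := sum_atoms_eq0 (sub_atoms t tL) (etrans (esym sum_st) sum0).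
  by move: size_st; rewrite s0 t0.
move/eqP: size_st; apply; apply: (M_half _ s t Ms); first exact/eqP.
  by split => //; exact: sub_atoms sL.
by split; [exact: sub_atoms tL | exact: esym sum_st].
Qed.

(* (a) -> (c): if dim cone(M) <= dim conv(A(M)), the span of the base point x0
   and of a dimension-realising family of conv(A(M)) is no larger than the
   direction space, so x0 lies in it and yields an affine relation among atoms. *)
Lemma HFM_affdim : (exists x, M x /\ x <> 0) -> HFM M ->
  exists m n : int, [/\ is_affdim (@convV R d (is_atom M)) m,
    is_affdim (@coneV R d M) n & m < n].
Proof.
move=> [x1 [Mx1 x1_nz]] M_hfm.
have [m conv_dim] := affdim_exists (@convV R d (is_atom M)).
have [n cone_dim] := affdim_exists (@coneV R d M).
exists m, n; split => //; rewrite ltNge; apply/negP => n_le_m.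
have [a a_atom] : exists a, is_atom M a.
  have [[|a s] [s_atoms s_sum]] := atomic Mx1; first by case: x1_nz; rewrite -s_sum big_nil.
  by exists a; apply: s_atoms; exact: mem_head.
case: conv_dim => [[empty _]|[x0 [x0_conv [[sc [sc_conv sc_dim]] _]]]].
  by case: (empty (emb R a)); exact: atom_convV.
pose U := <<x0 :: sc>>%VS.
have U_le_n : (\dim U)%:Z <= n.
  have [cone0 _] := @coneV_is_cone R d M.
  apply: dim_span_le_affdim cone0 cone_dim _ => v.
  by rewrite inE => /orP [/eqP -> | /sc_conv]; exact: convV_coneV.
have x0_dir : x0 \in direction x0 sc.
  have W_le_U : (direction x0 sc <= U)%VS.
    apply: direction_le_span; first by apply: memv_span; exact: mem_head.
    by move=> v v_sc; apply: memv_span; rewrite inE v_sc orbT.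
  have -> : direction x0 sc = U.
    by apply/eqP; rewrite eqEdim W_le_U -lez_nat sc_dim (le_trans U_le_n n_le_m).
  by apply: memv_span; exact: mem_head.
case: x0_conv x0_dir => L0 [L0_ok [L0_weight x0E]]; rewrite x0E => x0_dir.
have L0_atoms : atom_supported L0 by move=> p /L0_ok [].
have [L [L_atoms L_comb L_weight]] := direction_zero_weight L0_atoms L0_weight sc_conv x0_dir.
apply: (@HFM_no_affine_relation (L0 ++ scale_comb (-1) L)) => //.
- by apply: atom_supported_cat => //; exact: atom_supported_scale.
- by rewrite comb_cat comb_scale L_comb scaleN1r subrr.
- by rewrite weight_cat weight_scale L_weight mulr0 addr0.
Qed.

End HalfFactorialDimension.

Theorem mainTheorem8 (R : realFieldType) (d : nat) (M : 'rV[nat]_d -> Prop)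
  (HM : submonoid M) (Hnontriv : exists x, M x /\ x <> 0) :
  (HFM M <-> (forall F : 'rV[R]_d -> Prop, is_face (@coneV R d M) F ->
                 HFM (face_submonoid M F))) /\
  (HFM M <-> exists m n : int,
      is_affdim (@convV R d (is_atom M)) m /\ is_affdim (@coneV R d M) n /\ m < n).
Proof.
split; first exact: HFM_faces.
split=> [M_hfm | [m [n [conv_dim [cone_dim m_lt_n]]]]].
  by have [m [n [conv_dim cone_dim m_lt_n]]] := @HFM_affdim R d M HM Hnontriv M_hfm; exists m, n.
exact: affdim_HFM conv_dim cone_dim m_lt_n.
Qed.
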